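(* Let $(X,\mathcal{M})$ be a measurable space, $\Sigma$ a compact Hausdorff group with Haar probability measure $\mu_\Sigma$, and $T:\Sigma\times X\to X$ a measurable group action. Let $n\in\mathbb{Z}^+$, $V\subset\mathcal{M}_b(X)^n$ a linear subspace equipped with the $M(X)$-topology, and $\Gamma\subset V$. If $\Gamma$ is convex and closed, $S_\Sigma[V]\subset V$, and $\Gamma$ is closed under $\Sigma$ (i.e. $\gamma\circ T_\sigma\in\Gamma$ for all $\gamma\in\Gamma$, $\sigma\in\Sigma$), then $S_\Sigma[\Gamma]\subset\Gamma$.
   Context: $S_\Sigma[\gamma](x)=\int_\Sigma\gamma(T_\sigma(x))\mu_\Sigma(d\sigma)$, applied componentwise. $M(X)$-topology: with $M(X)$ the finite signed measures on $X$, for $\nu\in M(X)^n$ let $\tau_\nu(\gamma)=\sum_{i=1}^n\int\gamma^i d\nu_i$; $V$ carries the weakest topology making all $\tau_\nu$ continuous (a locally convex topology with dual $\{\tau_\nu\}$). *)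

From HB Require Import structures.
From mathcomp Require Import all_boot all_order all_algebra.
From mathcomp Require Import all_classical all_reals all_analysis.
Set Implicit Arguments. Unset Strict Implicit. Unset Printing Implicit Defensive.
Import Order.TTheory GRing.Theory Num.Theory.
Local Open Scope classical_set_scope.
Local Open Scope ring_scope.

Definition BorelT (S : ptopologicalType) := g_sigma_algebraType (@open S).

Section Defs.
Context {R : realType}.

Definition is_group {S : Type} (mul : S -> S -> S) (inv : S -> S) (e : S) :=
  [/\ (forall a b c, mul a (mul b c) = mul (mul a b) c),
      (forall a, mul e a = a) &
      (forall a, mul (inv a) a = e)].

Definition compact_hausdorff_group (S : ptopologicalType)
    (mul : S -> S -> S) (inv : S -> S) (e : S) :=
  [/\ is_group mul inv e,
      continuous (fun p : S * S => mul p.1 p.2),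
      continuous inv,
      compact [set: S] & hausdorff_space S].

Definition haar_probability (S : ptopologicalType) (mul : S -> S -> S)
    (mu : probability (BorelT S) R) :=
  (forall (g : S) (A : set (BorelT S)), measurable A ->
      mu [set mul g a | a in A] = mu A) /\
  (forall A : set (BorelT S), measurable A ->
      mu A = ereal_sup [set mu K | K in [set K : set S | compact K /\ K `<=` A]]).

Definition measurable_group_action (S : ptopologicalType) (mul : S -> S -> S)
    (e : S) {d} (X : measurableType d) (T : S -> X -> X) :=
  [/\ measurable_fun [set: (BorelT S * X)%type] (fun p : BorelT S * X => T p.1 p.2),
      (forall x, T e x = x) &
      (forall g h x, T (mul g h) x = T g (T h x))].

Definition Mb {d} (X : measurableType d) (n : nat) : set ('I_n -> X -> R) :=
  [set g : 'I_n -> X -> R | forall i, measurable_fun [set: X] (g i) /\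
                     exists M : R, forall x, `|g i x| <= M].

Definition linear_subspace {d} (X : measurableType d) (n : nat)
    (V : set ('I_n -> X -> R)) :=
  [/\ V `<=` @Mb _ X n, V (fun _ _ => 0) &
      (forall (a : R) g h, V g -> V h -> V (fun i x => a * g i x + h i x))].

(* A finite signed measure on X, represented (Jordan decomposition) as the
   difference nu.1 - nu.2 of two finite (positive) measures. *)
Definition fsmeasure {d} (X : measurableType d) :=
  ({finite_measure set X -> \bar R} * {finite_measure set X -> \bar R})%type.

Definition tau {d} {X : measurableType d} {n : nat}
    (nu : 'I_n -> fsmeasure X) (g : 'I_n -> X -> R) : R :=
  \sum_(i < n) (Rintegral (nu i).1 [set: X] (g i) - Rintegral (nu i).2 [set: X] (g i)).

(* Gamma is closed in V for the M(X)-topology (the weakest topology on V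
   making all tau_nu continuous): V \ Gamma is open, i.e. every point of
   V \ Gamma has a basic weak neighbourhood (finitely many tau's) in V \ Gamma. *)
Definition MX_closed {d} {X : measurableType d} {n : nat}
    (V Gam : set ('I_n -> X -> R)) :=
  forall g, V g -> ~ Gam g ->
    exists (k : nat) (nus : 'I_k -> 'I_n -> fsmeasure X) (eps : R), 0 < eps /\
      forall h, V h -> (forall j, `|tau (nus j) h - tau (nus j) g| < eps) -> ~ Gam h.

Definition is_convex {d} {X : measurableType d} {n : nat}
    (Gam : set ('I_n -> X -> R)) :=
  forall g h (t : R), Gam g -> Gam h -> 0 <= t <= 1 ->
    Gam (fun i x => t * g i x + (1 - t) * h i x).

Definition S_Sigma (S : ptopologicalType) (mu : probability (BorelT S) R)
    {d} {X : measurableType d} (T : S -> X -> X) {n : nat}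
    (g : 'I_n -> X -> R) : 'I_n -> X -> R :=
  fun i x => Rintegral mu [set: BorelT S] (fun s : BorelT S => g i (T s x)).

End Defs.

From HB Require Import structures.
From mathcomp Require Import all_boot all_order all_algebra.
From mathcomp Require Import all_classical all_reals all_analysis.
From mathcomp Require Import measurable_realfun lra.
Set Implicit Arguments.
Unset Strict Implicit.
Unset Printing Implicit Defensive.

Import Order.TTheory GRing.Theory Num.Theory.
Local Open Scope classical_set_scope.
Local Open Scope ring_scope.

(* Fubini turns tau_nu (S_Sigma g) into \int tau_nu (g o T_s) dmu(s). For
   finitely many such functionals of s, partition Sigma into finitely many
   measurable cells on which each of them oscillates by at most eps, weight
   each cell by its mu-measure and pick a point s_c in it: the convex
   combination sum_c w_c (g o T_{s_c}), which lies in Gamma by invariance and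
   convexity, is then eps-close to S_Sigma g for all these functionals. So
   every basic weak neighbourhood of S_Sigma g meets the closed set Gamma. *)

Section bounded_measurable.
Context {R : realType} {d} {T : measurableType d}.
Implicit Types (f g : T -> R) (mu : {measure set T -> \bar R}).

Definition bounded_measurable f :=
  measurable_fun [set: T] f /\ exists M : R, forall x, `|f x| <= M.

Lemma bounded_measurable_cst (c : R) : bounded_measurable (fun=> c).
Proof. by split; [exact: measurable_cst | exists `|c|]. Qed.

Lemma bounded_measurableD f g : bounded_measurable f -> bounded_measurable g ->
  bounded_measurable (fun x => f x + g x).
Proof.
move=> [mf [M fM]] [mg [N gN]]; split; first exact: measurable_realfun.measurable_funD.
by exists (M + N) => x; rewrite (le_trans (ler_normD _ _)) ?lerD.
Qed.

Lemma bounded_measurableM f g : bounded_measurable f -> bounded_measurable g ->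
  bounded_measurable (fun x => f x * g x).
Proof.
move=> [mf [M fM]] [mg [N gN]]; split; first exact: measurable_realfun.measurable_funM.
by exists (M * N) => x; rewrite normrM ler_pM.
Qed.

Lemma bounded_measurableZ (c : R) f : bounded_measurable f ->
  bounded_measurable (fun x => c * f x).
Proof. exact/bounded_measurableM/bounded_measurable_cst. Qed.

Lemma bounded_measurableB f g : bounded_measurable f -> bounded_measurable g ->
  bounded_measurable (fun x => f x - g x).
Proof.
move=> bf bg; have := bounded_measurableD bf (bounded_measurableZ (-1) bg).
by under eq_fun do rewrite mulN1r.
Qed.

Lemma bounded_measurable_norm f : bounded_measurable f ->
  bounded_measurable (fun x => `|f x|).
Proof.
move=> [mf [M fM]]; split; first exact: measurableT_comp.
by exists M => x; rewrite normr_id.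
Qed.

Lemma bounded_measurable_sum (I : Type) (r : seq I) (h : I -> T -> R) :
  (forall i, bounded_measurable (h i)) ->
  bounded_measurable (fun x => \sum_(i <- r) h i x).
Proof.
move=> bh; elim: r => [|i r IHr].
  by under eq_fun do rewrite big_nil; exact: bounded_measurable_cst.
by under eq_fun do rewrite big_cons; exact: bounded_measurableD.
Qed.

Lemma bounded_measurable_indic (A : set T) : measurable A ->
  bounded_measurable (\1_A : T -> R).
Proof.
move=> mA; split; first exact: measurable_indic.
by exists 1 => x; rewrite indicE; case: (_ \in _); rewrite ?normr1 ?normr0.
Qed.

Lemma bounded_measurable_integrable mu f : (mu [set: T] < +oo)%E ->
  bounded_measurable f -> mu.-integrable [set: T] (EFin \o f).
Proof.
move=> muT [mf [M fM]]; apply/integrableP; split; first exact/measurable_EFinP.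
apply: (@le_lt_trans _ _ (`|M|%:E * mu [set: T])%E); last exact: lte_mul_pinfty.
apply: integral_le_bound => //; first exact/measurable_EFinP.
by apply: aeW => x _ /=; rewrite lee_fin (le_trans (fM x)) ?ler_norm.
Qed.

Lemma finite_measure_integrable (mu : {finite_measure set T -> \bar R}) f :
  bounded_measurable f -> mu.-integrable [set: T] (EFin \o f).
Proof.
by apply: bounded_measurable_integrable; rewrite -ge0_fin_numE ?fin_num_measure.
Qed.

Lemma Rintegral_sum (mu : {finite_measure set T -> \bar R})
    (I : Type) (r : seq I) (h : I -> T -> R) :
  (forall i, bounded_measurable (h i)) ->
  \int[mu]_x (\sum_(i <- r) h i x) = \sum_(i <- r) \int[mu]_x h i x.
Proof.
move=> bh; elim: r => [|i r IHr].
  by under eq_Rintegral do rewrite big_nil; rewrite Rintegral_cst ?mul0r ?big_nil.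
under eq_Rintegral do rewrite big_cons.
rewrite big_cons -IHr RintegralD //; apply: finite_measure_integrable => //.
exact: bounded_measurable_sum.
Qed.

End bounded_measurable.

Section product.
Context {R : realType} {d1 d2} {T1 : measurableType d1} {T2 : measurableType d2}.
Variable f : T1 * T2 -> R.
Hypothesis bf : bounded_measurable f.

Lemma bounded_measurable_section1 (x : T1) : bounded_measurable (fun y => f (x, y)).
Proof.
have [mf [M fM]] := bf.
by split; [exact: measurable_fun_pair2 | exists M].
Qed.

Lemma bounded_measurable_section2 (y : T2) : bounded_measurable (fun x => f (x, y)).
Proof.
have [mf [M fM]] := bf.
by split; [exact: measurable_fun_pair1 | exists M].
Qed.

Lemma bounded_measurable_product_integrable (m1 : {finite_measure set T1 -> \bar R})
    (m2 : {finite_measure set T2 -> \bar R}) :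
  (m1 \x m2)%E.-integrable [set: T1 * T2] (EFin \o f).
Proof.
have m12T : ((m1 \x m2)%E [set: T1 * T2] < +oo)%E.
  rewrite -setXTT product_measure1E // lte_mul_pinfty ?fin_num_measure //.
  by rewrite -ge0_fin_numE ?fin_num_measure.
exact: bounded_measurable_integrable m12T bf.
Qed.

Lemma bounded_measurable_Rintegral2 (m2 : {finite_measure set T2 -> \bar R}) :
  bounded_measurable (fun x => \int[m2]_y f (x, y)).
Proof.
have [_ [M fM]] := bf; split.
  (* Measurability of partial integrals is only available for integrands that
     are integrable for some product measure; a Dirac mass on [T1] will do. *)
  have := bounded_measurable_product_integrable (\d_point) m2.
  by move/measurable_fubini_F; exact: measurableT_comp.
exists (M * fine (m2 [set: T2])) => x.
have bfx := bounded_measurable_section1 x.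
rewrite (le_trans (le_normr_Rintegral _ _)) ?finite_measure_integrable //.
rewrite -Rintegral_cst //; apply: le_Rintegral => //.
- exact/finite_measure_integrable/bounded_measurable_norm.
- exact/finite_measure_integrable/bounded_measurable_cst.
Qed.

Lemma Rintegral_swap (m1 : {finite_measure set T1 -> \bar R})
    (m2 : {finite_measure set T2 -> \bar R}) :
  \int[m1]_x \int[m2]_y f (x, y) = \int[m2]_y \int[m1]_x f (x, y).
Proof.
rewrite /Rintegral; transitivity (fine (\int[m1]_x (\int[m2]_y (f (x, y))%:E))%E).
  congr fine; apply: eq_integral => x _; rewrite fineK //.
  exact/integrable_fin_num/finite_measure_integrable/bounded_measurable_section1.
rewrite (Fubini (bounded_measurable_product_integrable m1 m2)).
congr fine; apply: eq_integral => y _; rewrite fineK //.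
exact/integrable_fin_num/finite_measure_integrable/bounded_measurable_section2.
Qed.

End product.

Section grid.
Context {R : realType}.
Variables (M del : R).
Hypothesis del_gt0 : 0 < del.

Definition grid_cell (m : nat) : set R := `[m%:R * del - M, m%:R * del - M + del[.

Definition grid_size : nat := (Num.trunc (2 * M / del)).+1.

Lemma grid_cell_uniq (m m' : nat) (y : R) :
  grid_cell m y -> grid_cell m' y -> m = m'.
Proof.
suff grid_cell_le m1 m2 : grid_cell m1 y -> grid_cell m2 y -> (m1 <= m2)%N.
  by move=> ym ym'; apply/eqP; rewrite eqn_leq !grid_cell_le.
rewrite /grid_cell /= !in_itv /= => /andP[m1y _] /andP[_ ym2].
by rewrite -ltnS -(ltr_nat R) -(ltr_pM2r del_gt0) -natr1; lra.
Qed.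

Lemma grid_cell_dist (m : nat) (y y' : R) :
  grid_cell m y -> grid_cell m y' -> `|y - y'| <= del.
Proof. by rewrite /grid_cell /= !in_itv /= ler_norml => /andP[? ?] /andP[? ?]; lra. Qed.

Lemma grid_cell_cover (y : R) : `|y| <= M -> exists m : 'I_grid_size, grid_cell m y.
Proof.
rewrite ler_norml => /andP[My yM]; set v := (y + M) / del.
have v_ge0 : 0 <= v by rewrite divr_ge0 ?(ltW del_gt0) // -lerBlDr sub0r.
have vdel : v * del = y + M by rewrite divfK ?gt_eqF.
have ltvN : (Num.trunc v < grid_size)%N.
  by rewrite ltnS le_truncn // ler_pM2r ?invr_gt0 //; lra.
exists (Ordinal ltvN); rewrite /grid_cell /= in_itv /=.
have /andP[tv vt] := truncn_itv v_ge0; rewrite -natr1 in vt.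
rewrite lerBlDr -vdel ler_pM2r // tv /=.
by move: vt; rewrite -(ltr_pM2r del_gt0) vdel; lra.
Qed.

End grid.

Section quadrature.
Context {R : realType} {d} {T : measurableType d} (mu : probability T R).

Lemma Rintegral_indic (A : set T) : measurable A ->
  \int[mu]_x (\1_A x : R) = fine (mu A).
Proof. by move=> mA; rewrite /Rintegral integral_indic ?setIT. Qed.

Lemma fine_probability_setT : fine (mu [set: T]) = 1.
Proof. by rewrite probability_setT. Qed.

Section partition.
Variables (K : finType) (A : K -> set T).
Hypotheses (mA : forall c, measurable (A c)) (partA : forall x, exists! c, A c x).

Lemma partition_quadrature (p : K -> T) (f : T -> R) (del : R) : bounded_measurable f ->
  (forall c x, A c x -> `|f (p c) - f x| <= del) ->
  `|\sum_c fine (mu (A c)) * f (p c) - \int[mu]_x f x| <= del.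
Proof.
move=> bf oscf.
have bstep : bounded_measurable (fun x => \sum_c \1_(A c) x * f (p c)).
  apply: bounded_measurable_sum => c.
  exact/bounded_measurableM/bounded_measurable_cst/bounded_measurable_indic.
have -> : \sum_c fine (mu (A c)) * f (p c) = \int[mu]_x \sum_c \1_(A c) x * f (p c).
  rewrite Rintegral_sum => [|c]; last first.
    exact/bounded_measurableM/bounded_measurable_cst/bounded_measurable_indic.
  apply: eq_bigr => c _.
  rewrite RintegralZr ?Rintegral_indic //.
  exact/finite_measure_integrable/bounded_measurable_indic.
rewrite -RintegralB //; [|exact: finite_measure_integrable bstep|
  exact: finite_measure_integrable bf].
rewrite (le_trans (le_normr_Rintegral _ _)) //.
  exact/finite_measure_integrable/bounded_measurableB.
rewrite -[leRHS]mulr1 -fine_probability_setT -Rintegral_cst //.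
apply: le_Rintegral => //.
- exact/finite_measure_integrable/bounded_measurable_norm/bounded_measurableB.
- exact/finite_measure_integrable/bounded_measurable_cst.
move=> x _; have [c [Acx c_uniq]] := partA x.
rewrite (bigD1 c) //= big1 ?addr0 => [|c' c'c].
  by rewrite indicE mem_set // mul1r oscf.
by rewrite indicE memNset ?mul0r // => /c_uniq cc'; rewrite cc' eqxx in c'c.
Qed.

Lemma partition_weights_sum : \sum_c fine (mu (A c)) = 1.
Proof.
have := partition_quadrature (p := fun=> point) (del := 0) (bounded_measurable_cst 1).
rewrite subrr normr0 lexx Rintegral_cst // fine_probability_setT mul1r.
under eq_bigr do rewrite mulr1.
by move=> /(_ (fun _ _ _ => erefl)); rewrite normr_le0 subr_eq0 => /eqP.
Qed.

End partition.

Lemma probability_convex_approx (k : nat) (F : 'I_k -> T -> R) (del : R) :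
  0 < del -> (forall j, bounded_measurable (F j)) ->
  exists (K : finType) (w : K -> R) (p : K -> T),
  [/\ forall c, 0 <= w c, \sum_c w c = 1 &
      forall j, `|\sum_c w c * F j (p c) - \int[mu]_x F j x| <= del].
Proof.
move=> del_gt0 bF.
have [M FM] : exists M : R, forall j x, `|F j x| <= M.
  have /fin_all_exists [Mj FMj] : forall j, exists Mj : R, forall x, `|F j x| <= Mj.
    by move=> j; have [_] := bF j.
  exists (\sum_j `|Mj j|) => j x; rewrite (le_trans (FMj j x)) //.
  by rewrite (le_trans (ler_norm _)) // (bigD1 j) //= lerDl sumr_ge0.
pose N := grid_size M del.
pose box (c : {ffun 'I_k -> 'I_N}) := [set x | forall j, grid_cell M del (c j) (F j x)].
have mbox c : measurable (box c).
  have -> : box c =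
      \bigcap_(j in [set: 'I_k]) ([set: T] `&` F j @^-1` grid_cell M del (c j)).
    apply/seteqP; split => [x Bx j _ | x Bx j]; first exact: conj I (Bx j).
    by have [] := Bx j I.
  apply: fin_bigcap_measurable; first exact: finite_finset.
  by move=> j _; apply: (bF j).1 => //; exact: measurable_itv.
have partbox x : exists! c, box c x.
  have /fin_all_exists [c Fc] : forall j, exists m : 'I_N, grid_cell M del m (F j x).
    by move=> j; exact: grid_cell_cover.
  exists [ffun j => c j]; split => [j|c' Bc']; first by rewrite ffunE.
  apply/ffunP => j; apply/val_inj; rewrite ffunE.
  exact: grid_cell_uniq (Fc j) (Bc' j).
exists {ffun 'I_k -> 'I_N}, (fun c => fine (mu (box c))), (fun c => xget point (box c)).
split=> [c|//|j]; first by rewrite fine_ge0 ?measure_ge0.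
  exact: partition_weights_sum.
apply: partition_quadrature => // c x Bx.
exact: grid_cell_dist (xgetI point Bx j) (Bx j).
Qed.

End quadrature.

Lemma is_convex_sum {R : realType} {d} {X : measurableType d} {n : nat}
    (Gam : set ('I_n -> X -> R)) (I : eqType) (r : seq I) (w : I -> R)
    (G : I -> 'I_n -> X -> R) :
  is_convex Gam -> (forall i, 0 <= w i) -> \sum_(i <- r) w i = 1 ->
  (forall i, Gam (G i)) -> Gam (fun j x => \sum_(i <- r) w i * G i j x).
Proof.
move=> convG; elim: r w => [|a r IHr] w w_ge0; rewrite ?big_nil ?big_cons.
  by move/eqP; rewrite eq_sym oner_eq0.
move=> w1 GG; set W := \sum_(i <- r) w i in w1.
have W_ge0 : 0 <= W by exact: sumr_ge0.
have [W0|W_neq0] := eqVneq W 0.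
  move: (W0) => /eqP; rewrite psumr_eq0 // => /allP wr0.
  suff -> : (fun j x => \sum_(i <- a :: r) w i * G i j x) = G a by [].
  apply/funext => j; apply/funext => x; rewrite big_cons big1_seq.
    by rewrite W0 addr0 in w1; rewrite w1 mul1r addr0.
  by move=> i /andP[_ /wr0 /eqP ->]; rewrite mul0r.
have W_gt0 : 0 < W by rewrite lt_def W_neq0 W_ge0.
have Gr : Gam (fun j x => \sum_(i <- r) w i / W * G i j x).
  apply: IHr => // [i|]; first exact: divr_ge0.
  by rewrite -mulr_suml divff.
have wa01 : 0 <= w a <= 1 by rewrite w_ge0 -w1 lerDl.
have := convG _ _ _ (GG a) Gr wa01; rewrite -w1 addrC addKr.
congr Gam; apply/funext => j; apply/funext => x.
rewrite big_cons mulr_sumr; congr (_ + _); apply: eq_bigr => i _.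
by rewrite mulrA mulrCA divff ?mulr1.
Qed.

Section tau.
Context {R : realType} {d d'} {X : measurableType d} {Y : measurableType d'} {n : nat}.
Variable nu : 'I_n -> fsmeasure (R := R) X.

Lemma bounded_measurable_tau (f : 'I_n -> Y * X -> R) :
  (forall i, bounded_measurable (f i)) ->
  bounded_measurable (fun y => tau nu (fun i x => f i (y, x))).
Proof.
move=> bf; apply: bounded_measurable_sum => i.
by apply: bounded_measurableB; exact: bounded_measurable_Rintegral2.
Qed.

Lemma tau_Rintegral (m : {finite_measure set Y -> \bar R}) (f : 'I_n -> Y * X -> R) :
  (forall i, bounded_measurable (f i)) ->
  tau nu (fun i x => \int[m]_y f i (y, x)) = \int[m]_y tau nu (fun i x => f i (y, x)).
Proof.
move=> bf; rewrite Rintegral_sum => [|i]; last first.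
  by apply: bounded_measurableB; exact: bounded_measurable_Rintegral2.
apply: eq_bigr => i _.
rewrite RintegralB ?Rintegral_swap //.
all: exact/finite_measure_integrable/bounded_measurable_Rintegral2.
Qed.

Lemma tau_sum (I : Type) (r : seq I) (w : I -> R) (G : I -> 'I_n -> X -> R) :
  (forall c i, bounded_measurable (G c i)) ->
  tau nu (fun i x => \sum_(c <- r) w c * G c i x) = \sum_(c <- r) w c * tau nu (G c).
Proof.
move=> bG; rewrite /tau; under [RHS]eq_bigr do rewrite mulr_sumr.
rewrite exchange_big /=; apply: eq_bigr => i _.
rewrite !Rintegral_sum => [|c|c]; try exact/bounded_measurableZ.
rewrite -sumrB; apply: eq_bigr => c _.
by rewrite !RintegralZl -?mulrBr //; exact: finite_measure_integrable.
Qed.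

End tau.

Theorem lemma3 (R : realType) (d : measure_display) (X : measurableType d)
  (S : ptopologicalType) (mul : S -> S -> S) (inv : S -> S) (e : S)
  (mu : probability (BorelT S) R) (T : S -> X -> X) (n : nat)
  (V Gam : set ('I_n -> X -> R)) :
  compact_hausdorff_group mul inv e ->
  haar_probability mul mu ->
  measurable_group_action mul e T ->
  (0 < n)%N ->
  linear_subspace V ->
  Gam `<=` V ->
  is_convex Gam ->
  MX_closed V Gam ->
  (forall g, V g -> V (S_Sigma mu T g)) ->
  (forall g (s : S), Gam g -> Gam (fun i x => g i (T s x))) ->
  forall g, Gam g -> Gam (S_Sigma mu T g).
Proof.
move=> _ _ [mT _ _] _ [VMb _ _] GamV convGam closedGam SV GamT g Gg.
apply: contrapT => SgNGam.
have [k [nus [eps [eps_gt0 nbhd]]]] := closedGam _ (SV g (GamV g Gg)) SgNGam.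
pose f i (p : BorelT S * X) := g i (T p.1 p.2).
have bf i : bounded_measurable (f i).
  have [mg [M gM]] := VMb g (GamV g Gg) i.
  by split; [exact: measurableT_comp mg mT | exists M => ?; exact: gM].
have eps2_gt0 : 0 < eps / 2 by rewrite divr_gt0.
have [K [w [p [w_ge0 w1 approx]]]] :=
  probability_convex_approx mu eps2_gt0 (fun j => bounded_measurable_tau (nus j) bf).
pose h i x := \sum_(c <- index_enum K) w c * g i (T (p c) x).
have Gh : Gam h.
  exact: is_convex_sum convGam w_ge0 w1 (fun c => GamT g (p c) Gg).
apply: nbhd (GamV h Gh) _ Gh => j.
rewrite tau_sum => [|c i]; last exact: bounded_measurable_section1 (bf i) (p c).
rewrite (tau_Rintegral (nus j) mu bf).
by rewrite (le_lt_trans (approx j)) // ltr_pdivrMr // ltr_pMr // ltr1n.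
Qed.
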